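(* Let $A\in\mathbb{R}^{n\times n}$, $B\in\mathbb{R}^{n\times m}$ be (unknown) matrices, and consider the discrete-time linear system $x^+=Ax+Bu$ with state set $X\subset\mathbb{R}^n$, initial set $X_{\mathcal I}\subset X$ and unsafe set $X_{\mathcal U}\subset X$. Let $\mathcal{U}_0=[u(0),\dots,u(T-1)]\in\mathbb{R}^{m\times T}$, $\mathcal{X}_0=[x(0),\dots,x(T-1)]\in\mathbb{R}^{n\times T}$, $\mathcal{X}_1=[x(1),\dots,x(T)]\in\mathbb{R}^{n\times T}$ be data from a single trajectory, i.e. $x(t+1)=Ax(t)+Bu(t)$, with $\mathcal{X}_0$ of full row rank, and let $Q\in\mathbb{R}^{T\times n}$ satisfy $\mathcal{X}_0Q=\mathbb{I}_n$. Suppose there exist a symmetric positive-definite matrix $P\in\mathbb{R}^{n\times n}$, $k\in\mathbb{N}_{>0}$ and $\gamma,\lambda,\epsilon\in\mathbb{R}_{\ge0}$ with $\lambda>\gamma+(k-1)\epsilon$ such that (i) $x^\top Px\le\gamma$ for all $x\in X_{\mathcal I}$; (ii) $x^\top Px\ge\lambda$ for all $x\in X_{\mathcal U}$; (iii) $x^\top Q^\top\mathcal{X}_1^\top P\mathcal{X}_1Qx\le x^\top Px+\epsilon$ for all $x\in X$; (iv) $((\mathcal{X}_1Q)^k)^\top P(\mathcal{X}_1Q)^k\preceq P$. Then $\mathcal{B}(x)=x^\top Px$ is a $k$-inductive control barrier certificate for the system and $u=\mathcal{U}_0Qx$ is a corresponding safety controller; that is, $\mathcal{B}(x)\le\gamma$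 on $X_{\mathcal I}$, $\mathcal{B}(x)\ge\lambda$ on $X_{\mathcal U}$, and, for every $x\in X$, with $x^+=Ax+B\,\mathcal{U}_0Qx$ and $x^{k+}$ the state after $k$ steps of this closed loop, $\mathcal{B}(x^+)\le\mathcal{B}(x)+\epsilon$ and $\mathcal{B}(x^{k+})\le\mathcal{B}(x)$.
   Context: $\mathbb{I}_n$ is the $n\times n$ identity; $\preceq$ is the Loewner order on symmetric matrices. A function $\mathcal{B}:X\to\mathbb{R}_{\ge0}$ is a $k$-inductive control barrier certificate ($k$-CBC) if there are $k\in\mathbb{N}_{>0}$ and $\gamma,\lambda,\epsilon\ge0$ with $\lambda>\gamma+(k-1)\epsilon$ such that $\mathcal{B}\le\gamma$ on $X_{\mathcal I}$, $\mathcal{B}\ge\lambda$ on $X_{\mathcal U}$, and for all $x\in X$ there is an input with $\mathcal{B}(x^+)\le\mathcal{B}(x)+\epsilon$ and $\mathcal{B}(x^{k+})\le\mathcal{B}(x)$, where $x^{k+}$ is the state after $k$ steps of the dynamics; a feedback realizing these inequalities is called a safety controller. *)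

From mathcomp Require Import all_boot all_order all_algebra.
From mathcomp Require Import reals.
Set Implicit Arguments. Unset Strict Implicit. Unset Printing Implicit Defensive.
Import Order.TTheory GRing.Theory Num.Theory.
Local Open Scope ring_scope.

Definition qform (R : realType) (n : nat) (M : 'M[R]_n) (x : 'cV[R]_n) : R :=
  ((x^T *m M *m x) 0 0).

Definition loewner_le (R : realType) (n : nat) (M N : 'M[R]_n) : Prop :=
  forall x : 'cV[R]_n, qform M x <= qform N x.

Definition spd (R : realType) (n : nat) (P : 'M[R]_n) : Prop :=
  P^T = P /\ forall x : 'cV[R]_n, x != 0 -> 0 < qform P x.

Definition cl_step (R : realType) (n m : nat) (A : 'M[R]_n) (B : 'M[R]_(n, m))
  (K : 'cV[R]_n -> 'cV[R]_m) (x : 'cV[R]_n) : 'cV[R]_n :=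
  A *m x + B *m K x.

Definition kCBC_with_controller (R : realType) (n m : nat)
  (A : 'M[R]_n) (B : 'M[R]_(n, m))
  (X XI XU : 'cV[R]_n -> Prop) (Bc : 'cV[R]_n -> R)
  (k : nat) (gamma lambda eps : R) (K : 'cV[R]_n -> 'cV[R]_m) : Prop :=
  ((0 < k)%N /\ 0 <= gamma /\ 0 <= lambda /\ 0 <= eps /\
      lambda > gamma + k.-1%:R * eps) /\
  (forall x, Bc x >= 0) /\
  (forall x, XI x -> Bc x <= gamma) /\
  (forall x, XU x -> Bc x >= lambda) /\
  (forall x, X x ->
     Bc (cl_step A B K x) <= Bc x + eps /\
     Bc (iter k (cl_step A B K) x) <= Bc x).

(** With u = U0 Q x the closed loop is x |-> (A X0 + B U0) Q x, since X0 Q = I.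
    The data identity X1 = A X0 + B U0, read column by column from the
    trajectory, turns this into the purely data-driven map x |-> X1 Q x, whose
    k-th iterate is (X1 Q)^k.  Pulling a linear map through the quadratic form,
    conditions (iii) and (iv) are then literally the two decrease conditions of
    a k-inductive barrier certificate, and (i), (ii) are the set conditions. *)

From mathcomp Require Import all_boot all_order all_algebra.
From mathcomp Require Import reals.
Import Order.TTheory GRing.Theory Num.Theory.
Local Open Scope ring_scope.

Lemma mx_data_eq {R : pzSemiRingType} {n p q T : nat}
    {A : 'M[R]_(n, p)} {B : 'M[R]_(n, q)}
    {X0 : 'M[R]_(p, T)} {U0 : 'M[R]_(q, T)} {X1 : 'M[R]_(n, T)} :
  (forall t : 'I_T, col t X1 = A *m col t X0 + B *m col t U0) ->
  X1 = A *m X0 + B *m U0.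
Proof.
move=> Hcol; apply/trmx_inj/row_matrixP => t.
by rewrite -!tr_col Hcol !colE mulmxDl !mulmxA.
Qed.

Lemma iter_mulmx (R : pzSemiRingType) (n : nat) (M : 'M[R]_n) (j : nat)
    (x : 'cV[R]_n) :
  iter j (mulmx M) x = M ^+ j *m x.
Proof.
elim: j => [|j IHj] /=; first by rewrite expr0 mul1mx.
by rewrite IHj exprS mulmxA.
Qed.

Section QuadraticForm.

Variables (R : realType) (n : nat).

Lemma qform_mulmx (P M : 'M[R]_n) (x : 'cV[R]_n) :
  qform P (M *m x) = qform (M^T *m P *m M) x.
Proof. by rewrite /qform trmx_mul !mulmxA. Qed.

Lemma qform_spd_ge0 (P : 'M[R]_n) (x : 'cV[R]_n) : spd P -> 0 <= qform P x.
Proof.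
move=> [_ Ppos]; have [->|x_neq0] := eqVneq x 0; last exact/ltW/Ppos.
by rewrite /qform mulmx0 mxE.
Qed.

End QuadraticForm.

Section DataDrivenClosedLoop.

Context {R : realType} {n m T : nat}.
Context {A : 'M[R]_n} {B : 'M[R]_(n, m)}.
Context {U0 : 'M[R]_(m, T)} {X0 X1 : 'M[R]_(n, T)} {Q : 'M[R]_(T, n)}.
Hypothesis X1_data : X1 = A *m X0 + B *m U0.
Hypothesis X0Q : X0 *m Q = 1%:M.

Let K (x : 'cV[R]_n) : 'cV[R]_m := U0 *m Q *m x.

Lemma cl_step_data : cl_step A B K =1 mulmx (X1 *m Q).
Proof.
move=> x; rewrite /cl_step /K X1_data mulmxDl -(mulmxA A) X0Q mulmx1.
by rewrite mulmxDl !mulmxA.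
Qed.

Lemma iter_cl_step_data (j : nat) (x : 'cV[R]_n) :
  iter j (cl_step A B K) x = (X1 *m Q) ^+ j *m x.
Proof. by rewrite (eq_iter cl_step_data) iter_mulmx. Qed.

End DataDrivenClosedLoop.

Theorem theorem2 (R : realType) (n m T : nat)
  (A : 'M[R]_n) (B : 'M[R]_(n, m))
  (X XI XU : 'cV[R]_n -> Prop)
  (HXI : forall x, XI x -> X x) (HXU : forall x, XU x -> X x)
  (U0 : 'M[R]_(m, T)) (X0 X1 : 'M[R]_(n, T))
  (Hdyn : forall t : 'I_T, col t X1 = A *m col t X0 + B *m col t U0)
  (Htraj : forall (t s : 'I_T), s = t.+1 :> nat -> col t X1 = col s X0)
  (Hrank : \rank X0 = n)
  (Q : 'M[R]_(T, n)) (HQ : X0 *m Q = 1%:M)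
  (P : 'M[R]_n) (k : nat) (gamma lambda eps : R)
  (HP : spd P) (Hk : (0 < k)%N)
  (Hg : 0 <= gamma) (Hl : 0 <= lambda) (He : 0 <= eps)
  (Hlam : lambda > gamma + k.-1%:R * eps)
  (Hi : forall x, XI x -> qform P x <= gamma)
  (Hii : forall x, XU x -> qform P x >= lambda)
  (Hiii : forall x, X x ->
     qform (Q^T *m X1^T *m P *m X1 *m Q) x <= qform P x + eps)
  (Hiv : loewner_le (((X1 *m Q) ^+ k)^T *m P *m (X1 *m Q) ^+ k) P) :
  kCBC_with_controller A B X XI XU (qform P) k gamma lambda eps
    (fun x => U0 *m Q *m x).
Proof.
have X1_data := mx_data_eq Hdyn.
split=> //; split=> [x|]; first exact: qform_spd_ge0.
do 2 split=> //.
move=> x Xx; split.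
- rewrite (cl_step_data X1_data HQ) qform_mulmx trmx_mul !mulmxA; exact: Hiii.
- rewrite (iter_cl_step_data X1_data HQ) qform_mulmx; exact: Hiv.
Qed.
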